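(* Let $R$ be a commutative Noetherian ring of prime characteristic $p$ and $G$ an $x$-torsion-free left $R[x,f]$-module. Then both the set $\mathcal{A}(G)$ of special annihilator submodules of $G$ and the set $\mathcal{I}(G)$ of $G$-special $R$-ideals are closed under arbitrary intersections.
   Context: $R[x,f]$ is the Frobenius skew polynomial ring: free left $R$-module on $(x^i)_{i\ge0}$, $xr=r^px$. $x$-torsion-free: $xg=0\Rightarrow g=0$. A special annihilator submodule of $G$ is one of the form $\{g:\theta g=0\ \forall\theta\in\mathfrak{B}\}$ for a graded two-sided ideal $\mathfrak{B}=\bigoplus_n\mathfrak{b}_nx^n$ ($(\mathfrak{b}_n)$ an ascending chain of ideals). $\operatorname{grann}N$ is the set of $\sum r_ix^i$ with each $r_ix^i$ annihilating $N$. $\mathcal{I}(G)$ is the set of ideals $\mathfrak{b}$ of $R$ with $\operatorname{grann}N=\bigoplus_n\mathfrak{b}x^n$ for some $R[x,f]$-submodule $N$ of $G$. *)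

From HB Require Import structures.
From mathcomp Require Import all_boot all_order all_algebra.
Set Implicit Arguments. Unset Strict Implicit. Unset Printing Implicit Defensive.
Import GRing.Theory.
Local Open Scope ring_scope.

Definition is_ideal (R : comNzRingType) (I : R -> Prop) : Prop :=
  [/\ I 0, (forall a b, I a -> I b -> I (a - b)) & (forall r a, I a -> I (r * a))].

Definition noetherian (R : comNzRingType) : Prop :=
  forall I : nat -> R -> Prop, (forall n, is_ideal (I n)) ->
    (forall n r, I n r -> I n.+1 r) ->
    exists m, forall n, (m <= n)%N -> forall r, I n r -> I m r.

(* A left R[x,f]-module (f the Frobenius r |-> r^p) is an R-module G together with
   the action phi : G -> G of x, which is additive and satisfies
   x (r g) = (x r) g = (r^p x) g = r^p (x g). *)
Definition frob_action (R : comNzRingType) (p : nat) (G : lmodType R) (phi : G -> G) : Prop :=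
  (forall g h, phi (g + h) = phi g + phi h) /\ (forall (r : R) g, phi (r *: g) = r ^+ p *: phi g).

(* Elements theta = sum_i r_i x^i of R[x,f] are represented by their coefficient
   sequence [:: r_0; r_1; ...] (R[x,f] is a free left R-module on the x^i). *)
Definition skewpoly (R : comNzRingType) := seq R.

Definition skew_act (R : comNzRingType) (G : lmodType R) (phi : G -> G)
  (theta : skewpoly R) (g : G) : G :=
  \sum_(i < size theta) theta`_i *: iter i phi g.

(* (b_n)_n is an ascending chain of ideals; the graded two-sided ideal is
   B = (+)_n b_n x^n. *)
Definition asc_ideal_chain (R : comNzRingType) (b : nat -> R -> Prop) : Prop :=
  (forall n, is_ideal (b n)) /\ (forall n r, b n r -> b n.+1 r).

Definition in_graded (R : comNzRingType) (b : nat -> R -> Prop) (theta : skewpoly R) : Prop :=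
  forall i, b i theta`_i.

Definition ann_sub (R : comNzRingType) (G : lmodType R) (phi : G -> G)
  (b : nat -> R -> Prop) : G -> Prop :=
  fun g => forall theta, in_graded b theta -> skew_act phi theta g = 0.

Definition special_ann (R : comNzRingType) (G : lmodType R) (phi : G -> G)
  (N : G -> Prop) : Prop :=
  exists b, asc_ideal_chain b /\ forall g, N g <-> ann_sub phi b g.

Definition is_submod (R : comNzRingType) (G : lmodType R) (phi : G -> G)
  (N : G -> Prop) : Prop :=
  [/\ N 0, (forall g h, N g -> N h -> N (g + h)),
      (forall (r : R) g, N g -> N (r *: g)) & (forall g, N g -> N (phi g))].

Definition grann (R : comNzRingType) (G : lmodType R) (phi : G -> G)
  (N : G -> Prop) : skewpoly R -> Prop :=
  fun theta => forall i g, N g -> theta`_i *: iter i phi g = 0.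

Definition G_special_ideal (R : comNzRingType) (G : lmodType R) (phi : G -> G)
  (b : R -> Prop) : Prop :=
  is_ideal b /\
  exists N, is_submod phi N /\
    forall theta, grann phi N theta <-> in_graded (fun _ => b) theta.

From HB Require Import structures.
From mathcomp Require Import all_boot all_order all_algebra.
Import GRing.Theory.
Set Implicit Arguments. Unset Strict Implicit. Unset Printing Implicit Defensive.
Local Open Scope ring_scope.

(* Since the annihilator of each x^i g is an ideal of R, a vector g is killed by
   a graded ideal (+)_n b_n x^n iff it is killed by every monomial r x^n with
   r in b_n.  Hence the annihilator of the sum of graded ideals (+)_n (sum_j b_jn) x^n,
   again an ascending chain, is the intersection of the annihilators: A(G) is
   closed under intersections.  For G-special ideals b_j with grann N_j =
   (+)_n b_j x^n, put b = /\_j b_j and let M be the submodule annihilated by all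
   b x^n; M contains every N_j, so grann M lies in every (+)_n b_j x^n, while
   (+)_n b x^n annihilates M by construction. *)

Section Ideals.

Variable R : comNzRingType.

Lemma is_ideal_bigcap (J : Type) (B : J -> R -> Prop) :
  (forall j, is_ideal (B j)) -> is_ideal (fun r => forall j, B j r).
Proof.
move=> hB; split=> [j | a b ha hb j | r a ha j]; case: (hB j) => h0 hD hM.
- exact: h0.
- exact: hD.
- exact: hM.
Qed.

Definition ideal_span (S : R -> Prop) : R -> Prop :=
  fun r => forall I, is_ideal I -> (forall a, S a -> I a) -> I r.

Lemma is_ideal_span (S : R -> Prop) : is_ideal (ideal_span S).
Proof.
split=> [I [h0 _ _] _ | a b ha hb I hI hS | r a ha I hI hS] //; case: (hI) => _ hD hM.
- by apply: hD; [apply: ha | apply: hb].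
- by apply: hM; apply: ha.
Qed.

Lemma mem_ideal_span (S : R -> Prop) a : S a -> ideal_span S a.
Proof. by move=> Sa I _; apply. Qed.

Lemma is_ideal_annihilator (G : lmodType R) (v : G) : is_ideal (fun r : R => r *: v = 0).
Proof.
split; first by rewrite scale0r.
- by move=> a b ha hb; rewrite scalerBl ha hb subrr.
- by move=> r a ha; rewrite -scalerA ha scaler0.
Qed.

End Ideals.

Section Monomials.

Variables (R : comNzRingType) (G : lmodType R) (phi : G -> G).

Definition skew_monomial (i : nat) (r : R) : skewpoly R := rcons (nseq i 0) r.

Lemma nth_skew_monomial i r k : (skew_monomial i r)`_k = if k == i then r else 0.
Proof. by rewrite nth_rcons size_nseq nth_nseq; case: ltngtP. Qed.

Lemma skew_act_monomial i r g : skew_act phi (skew_monomial i r) g = r *: iter i phi g.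
Proof.
rewrite /skew_act size_rcons size_nseq big_ord_recr /= big1 ?add0r.
  by rewrite nth_skew_monomial eqxx.
move=> k _; rewrite nth_skew_monomial ifF ?scale0r //.
by apply/negbTE; rewrite neq_ltn ltn_ord.
Qed.

Lemma ann_subP (b : nat -> R -> Prop) (hb : forall n, is_ideal (b n)) g :
  ann_sub phi b g <-> forall i r, b i r -> r *: iter i phi g = 0.
Proof.
split=> [hg i r hr | hg theta htheta].
- rewrite -skew_act_monomial; apply: hg => k; rewrite nth_skew_monomial.
  by case: eqP => [-> // | _]; case: (hb k).
- by rewrite /skew_act big1 // => i _; apply: hg.
Qed.

End Monomials.

Section SpecialAnnihilators.

Variables (R : comNzRingType) (G : lmodType R) (phi : G -> G).

Definition span_chain (C : (nat -> R -> Prop) -> Prop) : nat -> R -> Prop :=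
  fun n => ideal_span (fun a => exists2 b, C b & b n a).

Variable C : (nat -> R -> Prop) -> Prop.
Hypothesis chainC : forall b, C b -> asc_ideal_chain b.

Lemma asc_ideal_chain_span : asc_ideal_chain (span_chain C).
Proof.
split=> [n | n r hr]; first exact: is_ideal_span.
apply: hr => [|a [b Cb ban]]; first exact: is_ideal_span.
by apply: mem_ideal_span; exists b => //; case: (chainC Cb) => _; apply.
Qed.

Lemma ann_sub_span_chain g :
  ann_sub phi (span_chain C) g <-> forall b, C b -> ann_sub phi b g.
Proof.
have idealC (b : nat -> R -> Prop) n : C b -> is_ideal (b n) by case/chainC => + _; apply.
have idealS n : is_ideal (span_chain C n) by exact: is_ideal_span.
split=> [/(ann_subP phi idealS) hg b Cb | hg].
- apply/(ann_subP phi (idealC b ^~ Cb)) => i r hr.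
  by apply: hg; apply: mem_ideal_span; exists b.
- apply/(ann_subP phi idealS) => i r /(_ _ (is_ideal_annihilator (iter i phi g))).
  by apply=> a [b Cb hba]; move: (hg b Cb) => /(ann_subP phi (idealC b ^~ Cb)); apply.
Qed.

End SpecialAnnihilators.

Lemma special_ann_bigcap (R : comNzRingType) (G : lmodType R) (phi : G -> G)
  (J : Type) (N : J -> G -> Prop) :
  (forall j, special_ann phi (N j)) -> special_ann phi (fun g => forall j, N j g).
Proof.
move=> hN.
(* Summing over every chain presenting some N j avoids choosing one chain per j. *)
pose C b := exists j, asc_ideal_chain b /\ forall g, N j g <-> ann_sub phi b g.
have chainC b : C b -> asc_ideal_chain b by case=> j [].
exists (span_chain C); split; first exact: asc_ideal_chain_span.
move=> g; split=> [hg | /(ann_sub_span_chain phi chainC) hg j].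
- by apply/(ann_sub_span_chain phi chainC) => b [j [_ hb]]; apply/hb.
- by have [b [hb hNb]] := hN j; apply/hNb/hg; exists j.
Qed.

Section FrobeniusAction.

Variables (R : comNzRingType) (p : nat) (G : lmodType R) (phi : G -> G).
Hypothesis hphi : frob_action p phi.

Lemma iter_frob_actionD i g h : iter i phi (g + h) = iter i phi g + iter i phi h.
Proof. by elim: i g h => //= i IH g h; rewrite IH hphi.1. Qed.

Lemma iter_frob_action0 i : iter i phi 0 = 0.
Proof. by apply: (@addrI _ (iter i phi 0)); rewrite -iter_frob_actionD !addr0. Qed.

Lemma iter_frob_actionZ i (c : R) g : iter i phi (c *: g) = c ^+ (p ^ i) *: iter i phi g.
Proof. by elim: i c g => [|i IH] c g /=; rewrite ?expr1 // IH hphi.2 -exprM expnSr. Qed.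

Lemma is_submod_ann_sub (b : nat -> R -> Prop) :
  asc_ideal_chain b -> is_submod phi (ann_sub phi b).
Proof.
move=> [hb hasc]; have annP := ann_subP phi hb.
split=> [|g h /annP hg /annP hh|c g /annP hg|g /annP hg]; apply/annP => i r hr.
- by rewrite iter_frob_action0 scaler0.
- by rewrite iter_frob_actionD scalerDr hg // hh // addr0.
- by rewrite iter_frob_actionZ scalerA mulrC -scalerA hg // scaler0.
- by rewrite -iterSr; apply/hg/hasc.
Qed.

End FrobeniusAction.

Lemma grann_graded_annihilates (R : comNzRingType) (G : lmodType R) (phi : G -> G)
  (b : R -> Prop) (N : G -> Prop) :
  is_ideal b -> (forall theta, grann phi N theta <-> in_graded (fun _ => b) theta) ->
  forall g, N g -> forall i r, b r -> r *: iter i phi g = 0.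
Proof.
move=> hb hN g Ng i r hr.
have := proj2 (hN (skew_monomial i r)) _ i g Ng; rewrite nth_skew_monomial eqxx; apply.
by move=> k; rewrite nth_skew_monomial; case: eqP => _ //; case: hb.
Qed.

Lemma G_special_ideal_bigcap (R : comNzRingType) (p : nat) (G : lmodType R)
  (phi : G -> G) (hphi : frob_action p phi) (J : Type) (B : J -> R -> Prop) :
  (forall j, G_special_ideal phi (B j)) -> G_special_ideal phi (fun r => forall j, B j r).
Proof.
move=> hB; set b := fun r => forall j, B j r.
have hb : is_ideal b by apply: is_ideal_bigcap => j; case: (hB j).
have annP := ann_subP phi (fun _ => hb).
split=> //; exists (ann_sub phi (fun _ => b)); split.
  by apply: (is_submod_ann_sub hphi); split.
move=> theta; split=> [htheta i j | htheta i g /annP hg].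
- have [hBj [Nj [_ hNj]]] := hB j; apply: (proj1 (hNj theta)) => k g Njg.
  apply/htheta/annP => n r hr.
  exact: grann_graded_annihilates hBj hNj g Njg n r (hr j).
- exact/hg/htheta.
Qed.

Theorem corollary1p12 (R : comNzRingType) (p : nat) (hp : prime p)
  (hchar : p \in [pchar R]) (hnoeth : noetherian R)
  (G : lmodType R) (phi : G -> G) (hphi : frob_action p phi)
  (htf : forall g : G, phi g = 0 -> g = 0) :
  (forall (J : Type) (N : J -> G -> Prop),
      (forall j, special_ann phi (N j)) ->
      special_ann phi (fun g => forall j, N j g)) /\
  (forall (J : Type) (B : J -> R -> Prop),
      (forall j, G_special_ideal phi (B j)) ->
      G_special_ideal phi (fun r => forall j, B j r)).
Proof.
split=> J; first exact: special_ann_bigcap.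
exact: G_special_ideal_bigcap hphi J.
Qed.
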